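(* Let $a\in\mathbb{Q}\setminus\{-1,0,1\}$ and let $z\in\mathbb{C}$ with $|z|\le1$. For any positive real numbers $\xi<x$, \begin{multline*} \sum_{\substack{p\le x \\ \nu_p(a)=0}} z^{\Omega((p-1)/\mathrm{ord}_p(a))} = \sum_{\ell\mid Q_\xi} z^{\Omega(\ell)} (1-z^{-1})^{\omega(\ell)} \#\{ p\le x : \nu_p(a)=0,\ \ell \mid (p-1)/\mathrm{ord}_p(a) \} \\ + O\biggl( \sum_{\xi<q^k\le x} \#\{ p\le x : \nu_p(a)=0,\ q^k \mid (p-1)/\mathrm{ord}_p(a) \} \biggr), \end{multline*} with an absolute implied constant, where the error sum is over prime powers $q^k$ ($k\ge1$) in $(\xi,x]$.
   Context: $p,q$ denote primes. $\nu_p(a)$ is the $p$-adic valuation of $a$; $\mathrm{ord}_p(a)$ is the multiplicative order of $a$ mod $p$; $\omega,\Omega$ count prime factors without/with multiplicity. For $\xi>0$, $Q_\xi$ is the least common multiple of all positive integers $\le\xi$. The expression $z^{\Omega(\ell)}(1-z^{-1})^{\omega(\ell)}$ means the polynomial $z^{\Omega(\ell)-\omega(\ell)}(z-1)^{\omega(\ell)}$ (relevant at $z=0$), and $0^0=1$. *)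

From HB Require Import structures.
From mathcomp Require Import all_boot all_order all_algebra.
From mathcomp Require Import complex.
From mathcomp Require Import reals.
Set Implicit Arguments. Unset Strict Implicit. Unset Printing Implicit Defensive.
Import Order.TTheory GRing.Theory Num.Theory.
Local Open Scope ring_scope.

Definition nu (p : nat) (a : rat) : int :=
  (logn p `|numq a|%N)%:Z - (logn p `|denq a|%N)%:Z.

(* multiplicative order of a modulo p (for nu_p(a) = 0): the least k >= 1
   with numq a ^ k = denq a ^ k (mod p), i.e. a^k = 1 in F_p.
   (Such k exists in [1, p-1] when p is prime and nu_p(a) = 0.) *)
Definition ordp (p : nat) (a : rat) : nat :=
  head 0%N [seq k <- iota 1 p | ((p%:Z) %| numq a ^+ k - denq a ^+ k)%Z].

Definition omega (n : nat) : nat := size (primes n).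
Definition Omega (n : nat) : nat := \sum_(q <- primes n) logn q n.

Definition Qxi {R : realType} (xi : R) : nat :=
  \big[lcmn/1%N]_(1 <= i < (Num.truncn xi).+1) i.

Definition prime_power (n : nat) : bool :=
  [exists q : 'I_n.+1, [exists k : 'I_n.+1, [&& prime q, (0 < k)%N & n == q ^ k]%N]].

(* z^{Omega(l)} (1 - z^{-1})^{omega(l)}, read as the polynomial
   z^{Omega(l) - omega(l)} (z - 1)^{omega(l)} *)
Definition weight {R : realType} (z : R[i]) (l : nat) : R[i] :=
  z ^+ (Omega l - omega l) * (z - 1) ^+ omega l.

Definition cnt {R : realType} (a : rat) (x : R) (d : nat) : nat :=
  #|[set p : 'I_(Num.truncn x).+1 |
     [&& prime p, (p%:R <= x), nu p a == 0 & (d %| (p.-1 %/ ordp p a))%N]]|.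

(* Put n_p := (p - 1) / ord_p(a).  The weight l |-> z^(Omega l - omega l) (z - 1)^(omega l)
   is multiplicative and its sum over the divisors of q^e telescopes to z^e, so its sum
   over the divisors of any n > 0 is z^(Omega n).  Hence the main term is the sum over p
   of z^(Omega (gcd Q_xi n_p)), which differs from z^(Omega n_p) by at most 2, and only
   when n_p does not divide Q_xi.  Then some prime-power part q^k of n_p does not divide
   Q_xi, so xi < q^k <= n_p < p <= x and p is counted by the error term at q^k.  That
   n_p >= 1, i.e. ord_p(a) <= p - 1, is Fermat's little theorem. *)

From HB Require Import structures.
From mathcomp Require Import all_boot all_order all_algebra all_field.
From mathcomp Require Import complex.
From mathcomp Require Import reals zify.
Set Implicit Arguments. Unset Strict Implicit. Unset Printing Implicit Defensive.
Import Order.TTheory GRing.Theory Num.Theory.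

Lemma perm_primesM m n : coprime m n ->
  perm_eq (primes (m * n)) (primes m ++ primes n).
Proof.
have [->|m_gt0] := posnP m; first by rewrite /coprime gcd0n => /eqP->.
have [->|n_gt0] := posnP n; first by rewrite /coprime gcdn0 => /eqP->.
move=> co_mn; apply: uniq_perm => [||p]; first exact: primes_uniq.
  by rewrite cat_uniq !primes_uniq -coprime_has_primes // co_mn.
by rewrite mem_cat primesM.
Qed.

Lemma omegaM m n : coprime m n -> omega (m * n) = omega m + omega n.
Proof. by move/perm_primesM/perm_size; rewrite size_cat. Qed.

Lemma OmegaM m n : coprime m n -> Omega (m * n) = Omega m + Omega n.
Proof.
move=> co_mn; rewrite /Omega (perm_big _ (perm_primesM co_mn)) big_cat /=.
congr (_ + _); apply: eq_big_seq => p; rewrite mem_primes => /and3P[_ _ p_m].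
  by rewrite mulnC logn_Gauss // (coprime_dvdl p_m).
by rewrite logn_Gauss // (coprime_dvdl p_m) // coprime_sym.
Qed.

Lemma omega_pfactor p i : prime p -> omega (p ^ i.+1) = 1.
Proof. by move=> p_pr; rewrite /omega primesX // primes_prime. Qed.

Lemma Omega_pfactor p i : prime p -> Omega (p ^ i) = i.
Proof.
move=> p_pr; case: i => [|i]; first by rewrite /Omega big_nil.
by rewrite /Omega primesX // primes_prime // big_seq1 pfactorK.
Qed.

Lemma omega_le_Omega n : omega n <= Omega n.
Proof.
rewrite /omega /Omega -sum1_size !big_seq.
by apply: leq_sum => q; rewrite -logn_gt0.
Qed.

Lemma dvdn_coprime_gcdM d m n : coprime m n -> d %| m * n -> d = gcdn d m * gcdn d n.
Proof.
move=> co_mn d_mn; have co_g : coprime (gcdn d m) (gcdn d n).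
  exact: coprime_dvdl (dvdn_gcdr _ _) (coprime_dvdr (dvdn_gcdr _ _) co_mn).
apply/eqP; rewrite eqn_dvd Gauss_dvd // !dvdn_gcdl !andbT.
by rewrite muln_gcdl !muln_gcdr !dvdn_gcd d_mn !(dvdn_mulr _ (dvdnn d)) dvdn_mull.
Qed.

Lemma perm_divisorsM m n : coprime m n -> 0 < m -> 0 < n ->
  perm_eq (divisors (m * n)) [seq a * b | a <- divisors m, b <- divisors n].
Proof.
move=> co_mn m_gt0 n_gt0; have mn_gt0 : 0 < m * n by rewrite muln_gt0 m_gt0.
have gcd_split a b : a %| m -> b %| n -> gcdn (a * b) m = a /\ gcdn (a * b) n = b.
  move=> a_m b_n; rewrite ![gcdn (a * b) _]gcdnC Gauss_gcdl ?Gauss_gcdr.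
  - by split; apply/gcdn_idPr.
  - by rewrite coprime_sym (coprime_dvdl a_m).
  - exact: coprime_dvdr b_n co_mn.
apply: uniq_perm; first exact: divisors_uniq.
  apply: allpairs_uniq; [exact: divisors_uniq | exact: divisors_uniq |].
  move=> [a b] [a' b'] /allpairsP[[u v] /= [u_m v_n [-> ->]]].
  move=> /allpairsP[[u' v'] /= [u'_m v'_n [-> ->]]] /= eq_uv.
  rewrite -!dvdn_divisors // in u_m v_n u'_m v'_n.
  have [gu gv] := gcd_split _ _ u_m v_n; have [gu' gv'] := gcd_split _ _ u'_m v'_n.
  by congr (_, _); [rewrite -gu -gu' eq_uv | rewrite -gv -gv' eq_uv].
move=> d; rewrite -dvdn_divisors //; apply/idP/allpairsP => [d_mn|].
  exists (gcdn d m, gcdn d n); rewrite -!dvdn_divisors ?dvdn_gcdr //.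
  by split; last exact: dvdn_coprime_gcdM.
by move=> [[a b] /= [+ + ->]]; rewrite -!dvdn_divisors // => ? ?; apply: dvdn_mul.
Qed.

Lemma divisors_pfactor p e : prime p ->
  divisors (p ^ e) = [seq p ^ i | i <- iota 0 e.+1].
Proof.
move=> p_pr; apply: (irr_sorted_eq ltn_trans ltnn (sorted_divisors_ltn _)).
  rewrite sorted_map; apply: sub_sorted (iota_ltn_sorted 0 e.+1) => i j /=.
  by rewrite ltn_exp2l ?prime_gt1.
move=> d; rewrite -dvdn_divisors ?expn_gt0 ?prime_gt0 //.
apply/(dvdn_pfactor _ _ p_pr)/mapP => [[i i_le ->] | [i i_in ->]]; exists i => //.
  by rewrite mem_iota.
by rewrite mem_iota in i_in.
Qed.

Lemma divisors_gcdn m n : 0 < m ->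
  divisors (gcdn m n) = [seq d <- divisors m | d %| n].
Proof.
move=> m_gt0; have g_gt0 : 0 < gcdn m n by rewrite gcdn_gt0 m_gt0.
apply: (irr_sorted_eq ltn_trans ltnn (sorted_divisors_ltn _)).
  exact: sorted_filter ltn_trans _ _ (sorted_divisors_ltn m).
by move=> d; rewrite mem_filter -!dvdn_divisors // dvdn_gcd andbC.
Qed.

Lemma logn_coprime_eq0 p m n : coprime m n -> logn p m = logn p n -> logn p m = 0.
Proof.
move=> co_mn eq_log; apply/eqP; rewrite -leqn0 leqNgt; apply/negP => log_gt0.
have : p \in primes n by rewrite -logn_gt0 -eq_log.
move: log_gt0; rewrite logn_gt0 !mem_primes => /and3P[p_pr _ p_m] /and3P[_ _ p_n].
by move: (dvdn_gcd p m n); rewrite p_m p_n (eqP co_mn) dvdn1 => /eqP p1; rewrite p1 in p_pr.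
Qed.

Lemma head_filter_iota (P : pred nat) m n k : k \in iota m n -> P k ->
  m <= head 0 [seq i <- iota m n | P i] <= k.
Proof.
move=> k_in Pk; have : k \in [seq i <- iota m n | P i] by rewrite mem_filter Pk.
have : sorted leq [seq i <- iota m n | P i].
  exact: sorted_filter leq_trans _ _ (iota_sorted m n).
have : all (leq m) [seq i <- iota m n | P i].
  by apply/allP => i; rewrite mem_filter mem_iota => /and3P[].
case: [seq i <- iota m n | P i] => [|h t] //= /andP[m_h _] /(order_path_min leq_trans).
rewrite m_h => /allP t_ge; rewrite inE => /orP[/eqP-> | /t_ge //]; exact: leqnn.
Qed.

Lemma prime_power_pfactor q k : prime q -> 0 < k -> prime_power (q ^ k).
Proof.
move=> q_pr k_gt0; have q_gt1 := prime_gt1 q_pr.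
have q_lt : q < (q ^ k).+1 by rewrite ltnS -{1}(expn1 q) leq_pexp2l // ltnW.
have k_lt : k < (q ^ k).+1 by apply: ltnW; rewrite ltnS ltn_expl.
apply/existsP; exists (Ordinal q_lt); apply/existsP; exists (Ordinal k_lt).
by rewrite /= q_pr k_gt0 /=.
Qed.

Lemma ndvdn_pfactor n m : 0 < n -> ~~ (n %| m) ->
  exists2 q, q \in primes n & ~~ (q ^ logn q n %| m).
Proof.
move=> n_gt0 n_ndvd; apply/hasP; apply: contraR n_ndvd => /hasPn q_dvd.
by apply/dvdn_partP => // q q_n; rewrite p_part; apply/negPn/q_dvd.
Qed.

Section Qxi.
Variables (R : realType) (xi : R).

Lemma Qxi_gt0 : 0 < Qxi xi.
Proof.
rewrite /Qxi big_seq; apply: (big_ind (fun n => 0 < n)) => // [u v|i].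
  by rewrite lcmn_gt0 => ->.
by rewrite mem_index_iota => /andP[].
Qed.

Lemma dvdn_Qxi i : 0 < i -> (i%:R <= xi)%R -> i %| Qxi xi.
Proof.
move=> i_gt0 i_le; have xi_ge0 : (0 <= xi)%R by apply: le_trans i_le.
rewrite /Qxi (bigD1_seq i) /= ?dvdn_lcml ?iota_uniq //.
by rewrite mem_index_iota i_gt0 ltnS truncn_ge_nat.
Qed.

Lemma ndvdn_Qxi n : 0 < n -> ~~ (n %| Qxi xi) ->
  exists2 d, prime_power d & (d %| n) && (xi < d%:R)%R.
Proof.
move=> n_gt0 /(ndvdn_pfactor n_gt0)[q q_n d_ndvd].
have q_pr : prime q by move: q_n; rewrite mem_primes => /andP[].
exists (q ^ logn q n); first by rewrite prime_power_pfactor // logn_gt0.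
rewrite pfactor_dvdnn /= ltNge; apply: contra d_ndvd.
by apply: dvdn_Qxi; rewrite expn_gt0 prime_gt0.
Qed.

End Qxi.

Lemma nu_eq0_ndvdz p (a : rat) : prime p -> (a != 0)%R -> nu p a = 0%R ->
  ~~ (p %| numq a)%Z /\ ~~ (p %| denq a)%Z.
Proof.
move=> p_pr a_neq0 /eqP; rewrite subr_eq0 => /eqP [] eq_log.
have log_num := logn_coprime_eq0 (coprime_num_den a) eq_log.
rewrite !dvdzE /= -(expn1 p).
by rewrite !pfactor_dvdn ?absz_gt0 ?numq_eq0 ?denq_eq0 // -eq_log log_num.
Qed.

Lemma expf_card_pred (F : finFieldType) (u : F) : (u != 0)%R -> (u ^+ #|F|.-1)%R = 1%R.
Proof.
move=> u_neq0; apply: (mulfI u_neq0); rewrite mulr1 -exprS.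
by rewrite prednK ?expf_card // (ltn_trans _ (finNzRing_gt1 F)).
Qed.

Lemma dvdz_fermat p (u v : int) : prime p ->
  ~~ (p %| u)%Z -> ~~ (p %| v)%Z -> (p %| (u ^+ p.-1 - v ^+ p.-1)%R)%Z.
Proof.
move=> p_pr; have pchar_p := pchar_Fp p_pr.
rewrite !(dvdz_pcharf pchar_p) rmorphB !rmorphXn /= => u_neq0 v_neq0.
by rewrite -[in p.-1](card_Fp p_pr) !expf_card_pred // subrr.
Qed.

Lemma ordp_bounds p (a : rat) : prime p -> (a != 0)%R -> nu p a = 0%R ->
  0 < ordp p a <= p.-1.
Proof.
move=> p_pr a_neq0 nu0; have [num_p den_p] := nu_eq0_ndvdz p_pr a_neq0 nu0.
have p_gt1 := prime_gt1 p_pr.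
apply: head_filter_iota; first by rewrite mem_iota; lia.
exact: dvdz_fermat.
Qed.

Section Weight.
Variables (R : realType) (z : R[i]).
Local Open Scope ring_scope.

Lemma big_divisorsM (S : pzSemiRingType) (f : nat -> S) m n :
  coprime m n -> (0 < m)%N -> (0 < n)%N ->
  (forall a b, (a %| m)%N -> (b %| n)%N -> f (a * b) = f a * f b) ->
  \sum_(d <- divisors (m * n)) f d
    = (\sum_(a <- divisors m) f a) * (\sum_(b <- divisors n) f b).
Proof.
move=> co_mn m_gt0 n_gt0 fM.
rewrite (perm_big _ (perm_divisorsM co_mn m_gt0 n_gt0)) big_allpairs_dep mulr_suml.
apply: eq_big_seq => a; rewrite -dvdn_divisors // => a_m.
rewrite mulr_sumr; apply: eq_big_seq => b; rewrite -dvdn_divisors // => b_n.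
exact: fM.
Qed.

Lemma weight1 : weight z 1 = 1.
Proof. by rewrite /weight /Omega big_nil !expr0 mulr1. Qed.

Lemma weightM m n : coprime m n -> weight z (m * n) = weight z m * weight z n.
Proof.
move=> co_mn; rewrite /weight OmegaM // omegaM // mulrACA -!exprD.
have := omega_le_Omega m; have := omega_le_Omega n.
by move=> *; congr (_ ^+ _ * _); lia.
Qed.

Lemma weight_pfactor p i : prime p -> weight z (p ^ i.+1) = z ^+ i * (z - 1).
Proof. by move=> p_pr; rewrite /weight Omega_pfactor // omega_pfactor // subn1. Qed.

Lemma sum_weight_pfactor p e : prime p ->
  \sum_(d <- divisors (p ^ e)) weight z d = z ^+ e.
Proof.
move=> p_pr; rewrite divisors_pfactor // big_map -/(index_iota 0 e.+1).
elim: e => [|e IHe]; first by rewrite big_nat1 weight1.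
by rewrite big_nat_recr //= IHe weight_pfactor // mulrBr mulr1 addrC subrK exprSr.
Qed.

Lemma sum_weight_divisors m : (0 < m)%N ->
  \sum_(l <- divisors m) weight z l = z ^+ Omega m.
Proof.
elim/ltn_ind: m => m IHm m_gt0; have [m_le1 | m_gt1] := leqP m 1.
  have -> : m = 1%N by lia.
  by rewrite big_seq1 weight1 /Omega big_nil.
have p_pr : prime (pdiv m) by rewrite pdiv_prime.
have [m' co_pm' def_m] := pfactor_coprime p_pr m_gt0.
set e := logn _ m in def_m.
have e_gt0 : (0 < e)%N by rewrite logn_gt0 mem_primes p_pr m_gt0 pdiv_dvd.
have m'_gt0 : (0 < m')%N by move: m_gt0; rewrite def_m muln_gt0 => /andP[].
have m'_lt : (m' < m)%N.
  by rewrite def_m -[ltnLHS]muln1 ltn_pmul2l // -(expn0 (pdiv m)) ltn_exp2l ?prime_gt1.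
have co_m' : coprime (pdiv m ^ e) m' by rewrite coprimeXl.
rewrite def_m mulnC big_divisorsM ?expn_gt0 ?pdiv_gt0 //; last first.
  by move=> a b a_pe b_m'; apply/weightM/(coprime_dvdl a_pe)/(coprime_dvdr b_m').
by rewrite sum_weight_pfactor // IHm // OmegaM // Omega_pfactor // exprD.
Qed.

Lemma sum_weight_dvdn Q n : (0 < Q)%N ->
  \sum_(l <- divisors Q) weight z l * (l %| n)%:R = z ^+ Omega (gcdn Q n).
Proof.
move=> Q_gt0; rewrite -sum_weight_divisors ?gcdn_gt0 ?Q_gt0 //.
rewrite divisors_gcdn // big_filter [RHS]big_mkcond.
by apply: eq_bigr => l _; rewrite mulr_natr mulrb.
Qed.

Lemma norm_exprB_le2 i j : `|z| <= 1 -> `|z ^+ i - z ^+ j| <= 2.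
Proof.
move=> z_le1; apply: le_trans (ler_normB _ _) _; rewrite !normrX.
by rewrite -[2]/(1 + 1) lerD // exprn_ile1.
Qed.

Lemma norm_exprB_Omega_gcdn (Q n : nat) : `|z| <= 1 ->
  `|z ^+ Omega n - z ^+ Omega (gcdn Q n)| <= 2 * (~~ (n %| Q)%N)%:R.
Proof.
move=> z_le1; have [n_Q | _] := boolP (n %| Q)%N.
  by rewrite (gcdn_idPr n_Q) subrr normr0 mulr0.
by rewrite mulr1 norm_exprB_le2.
Qed.

End Weight.

Section Counting.
Variables (R : realType) (a : rat) (x : R).

Local Notation counted p := (prime p && (p%:R <= x) && (nu p a == 0))%R.

Lemma cntE d :
  cnt a x d = \sum_(p < (Num.truncn x).+1 | counted p) (d %| p.-1 %/ ordp p a).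
Proof.
by rewrite /cnt -sum1_card -[RHS]big_mkcondr; apply: eq_bigl => p; rewrite inE !andbA.
Qed.

Lemma sum_weight_cnt (z : R[i]) Q : 0 < Q ->
  (\sum_(l <- divisors Q) weight z l * (cnt a x l)%:R
    = \sum_(p < (Num.truncn x).+1 | counted p) z ^+ Omega (gcdn Q (p.-1 %/ ordp p a)))%R.
Proof.
move=> Q_gt0; under eq_bigr => l _ do rewrite cntE natr_sum mulr_sumr.
by rewrite exchange_big; apply: eq_bigr => p _; rewrite -sum_weight_dvdn.
Qed.

Lemma count_ndvdn_Qxi (xi : R) : a != 0%R ->
  \sum_(p < (Num.truncn x).+1 | counted p) ~~ (p.-1 %/ ordp p a %| Qxi xi)
    <= \sum_(n < (Num.truncn x).+1 | prime_power n && (xi < n%:R)%R && (n%:R <= x)%R)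
         cnt a x n.
Proof.
move=> a_neq0; under [leqRHS]eq_bigr => n _ do rewrite cntE.
rewrite exchange_big /=; apply: leq_sum => p /andP[/andP[p_pr p_x] /eqP nu0].
have [//|np_ndvd] := boolP (p.-1 %/ ordp p a %| Qxi xi).
have /andP[ord_gt0 ord_le] := ordp_bounds p_pr a_neq0 nu0.
have np_gt0 : 0 < p.-1 %/ ordp p a by rewrite divn_gt0.
have [d d_pp /andP[d_np xi_d]] := ndvdn_Qxi np_gt0 np_ndvd.
have d_lt_p : d < p.
  have := leq_div p.-1 (ordp p a); have := dvdn_leq np_gt0 d_np.
  by have := prime_gt0 p_pr; lia.
have d_lt : d < (Num.truncn x).+1 := ltn_trans d_lt_p (ltn_ord p).
rewrite (bigD1 (Ordinal d_lt)) /= ?d_np // d_pp xi_d /=.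
by apply: le_trans p_x; rewrite ler_nat ltnW.
Qed.

End Counting.

Local Open Scope ring_scope.

Theorem proposition2p5 :
  exists C : rat, forall (R : realType) (a : rat) (z : R[i]) (xi x : R),
    a \notin [:: -1; 0; 1] -> `|z| <= 1 -> 0 < xi -> xi < x ->
    `| \sum_(p < (Num.truncn x).+1 | prime p && (p%:R <= x) && (nu p a == 0))
          z ^+ Omega (p.-1 %/ ordp p a)
       - \sum_(l <- divisors (Qxi xi)) weight z l * (cnt a x l)%:R |
    <= (ratr C : R[i]) *
       (\sum_(n < (Num.truncn x).+1 | prime_power n && (xi < n%:R) && (n%:R <= x))
          cnt a x n)%:R.
Proof.
(* The bound holds without the hypotheses 0 < xi < x. *)
exists 2%:R => R a z xi x a_nontriv z_le1 _ _.
have a_neq0 : a != 0 by apply: contra a_nontriv => /eqP->; rewrite !inE eqxx orbT.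
rewrite sum_weight_cnt ?Qxi_gt0 // -sumrB ratr_nat.
apply: le_trans (ler_norm_sum _ _ _) _.
apply: le_trans (ler_sum _ (fun p _ => norm_exprB_Omega_gcdn (Qxi xi) _ z_le1)) _.
by rewrite -mulr_sumr -natr_sum ler_pM2l ?ltr0n // ler_nat count_ndvdn_Qxi.
Qed.
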